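(* Let $\boldsymbol X=A\times_{\max}\boldsymbol Z$ be a recursive max-linear model on a DAG $\mathcal D=(V,E)$ satisfying Assumptions A, and fix any $a>1$. A node $j\in V$ is a source node (i.e. $\mathrm{pa}(j)=\emptyset$) if and only if $$\sigma^2_{M_{i,aj}}-\sigma^2_{M_{ij}}=(a^2-1)\sigma_i^2=a^2-1\quad\text{for all } i\in V\setminus\{j\}.$$ Moreover, if $j$ is not a source node, then $\sigma^2_{M_{i,aj}}-\sigma^2_{M_{ij}}\le a^2-1$ for all $i\neq j$, with strict inequality whenever $i\in\mathrm{an}(j)$.
   Context: Let $\mathcal D=(V,E)$ be a directed acyclic graph with $V=\{1,\dots,d\}$; $\mathrm{pa}(i)$, $\mathrm{an}(i)$, $\mathrm{de}(i)$ denote parents, ancestors (nodes with a directed path to $i$) and descendants of $i$, $\mathrm{An}(i)=\mathrm{an}(i)\cup\{i\}$; $\vee$ denotes maximum. A recursive max-linear model (RMLM) on $\mathcal D$ is the unique solution of $X_i=\bigvee_{k\in\mathrm{pa}(i)}c_{ik}X_k\vee c_{ii}Z_i$, $i\in V$, with edge weights $c_{ik}>0$ ($k\in \mathrm{pa}(i)$), $c_{ii}>0$; it equals $X_i=(A\times_{\max}\boldsymbol Z)_i=\bigvee_{j\in V}a_{ij}Z_j$ where $a_{ii}=c_{ii}$, $a_{ij}$ for $j\in\mathrm{an}(i)$ is the maximum over all directed paths $j=\ell_0\to\ell_1\to\dots\to\ell_m=i$ of $c_{jj}c_{\ell_1\ell_0}\cdots c_{\ell_m\ell_{m-1}}$,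 and $a_{ij}=0$ for $j\notin\mathrm{An}(i)$. Assumptions A: (A1) $Z_1,\dots,Z_d$ are independent, nonnegative, atom-free, with $n\,\mathbb P(n^{-1/2}Z_i>z)\to z^{-2}$ as $n\to\infty$ for all $z>0$; (A2) the norm is the Euclidean norm $\|\cdot\|$; (A3) $A$ is standardised, i.e. each row is divided by its Euclidean norm so that $\sum_{j\in V}a_{ij}^2=1$ for all $i$ (the model is taken as $\boldsymbol X=A\times_{\max}\boldsymbol Z$ with this standardised $A$). Under these assumptions it is known that $a_{ij}>0$ iff $j\in\mathrm{An}(i)$, and $a_{jj}>a_{ij}$ for all $i\neq j$. Angular measure: with columns $\boldsymbol a_k$ of $A$, $\boldsymbol X$ has angular measure $H_{\boldsymbol X}=\sum_{k\in V}\|\boldsymbol a_k\|^2\delta_{\boldsymbol a_k/\|\boldsymbol a_k\|}$ on $\Theta^{d-1}_+=\{\boldsymbol\omega\in[0,\infty)^d:\|\boldsymbol\omega\|=1\}$. For weights $b_1,\dots,b_d\ge0$, the squared scaling of the max-projection $Y=\bigvee_k b_kX_k$ is $\sigma_Y^2=\int_{\Theta^{d-1}_+}\bigvee_k b_k^2\omega_k^2\,dH_{\boldsymbol X}(\boldsymbol\omega)$; $\sigma_i^2:=\sigma^2_{X_i}$. Notation: $M_{i,aj}=X_i\vee aX_j$, $M_{ij}=X_i\vee X_j$. *)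

From mathcomp Require Import all_boot all_order all_algebra.
Set Implicit Arguments. Unset Strict Implicit. Unset Printing Implicit Defensive.
Import Order.TTheory GRing.Theory Num.Theory.
Local Open Scope ring_scope.

(* Nodes V = {1..d} are represented by 'I_d.  A DAG is an edge relation
   E : rel 'I_d, where  E k i  means there is an edge k -> i (k is a parent of i). *)

Definition acyclic (d : nat) (E : rel 'I_d) : Prop :=
  forall k i, E k i -> ~~ connect E i k.

Definition source (d : nat) (E : rel 'I_d) (j : 'I_d) : Prop :=
  forall k, ~~ E k j.

Definition ancestor (d : nat) (E : rel 'I_d) (i j : 'I_d) : bool :=
  connect E i j && (i != j).

(* weight c_jj c_{l1 l0} ... c_{lm l(m-1)} of the directed path j = l0 -> l1 -> ... -> lm,
   given as j and the sequence s = [l1; ...; lm] *)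
Definition path_weight (R : numDomainType) (d : nat) (c : 'I_d -> 'I_d -> R)
    (j : 'I_d) (s : seq 'I_d) : R :=
  c j j * \prod_(p <- zip (j :: s) s) c p.2 p.1.

(* In a DAG on d nodes every directed path has fewer
   than d edges, so the maximum over paths with m < d edges is the maximum over all
   directed paths. *)
Definition coef_raw (R : numDomainType) (d : nat) (E : rel 'I_d)
    (c : 'I_d -> 'I_d -> R) (i j : 'I_d) : R :=
  \big[Num.max/0]_(m < d)
     \big[Num.max/0]_(s : m.-tuple 'I_d | path E j s && (last j s == i))
        path_weight c j s.

(* Standardised A (Assumption A3): each row divided by its Euclidean norm. *)
Definition coef (R : rcfType) (d : nat) (E : rel 'I_d)
    (c : 'I_d -> 'I_d -> R) (i j : 'I_d) : R :=
  coef_raw E c i j / Num.sqrt (\sum_(l < d) coef_raw E c i l ^+ 2).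

Definition colnorm (R : rcfType) (d : nat) (A : 'I_d -> 'I_d -> R) (k : 'I_d) : R :=
  Num.sqrt (\sum_(l < d) A l k ^+ 2).

(* sigma_Y^2 for Y = \/_l b_l X_l, computed as the integral of \/_l b_l^2 w_l^2 against
   the angular measure H_X = \sum_k ||a_k||^2 delta_{a_k/||a_k||}. *)
Definition sigma2 (R : rcfType) (d : nat) (A : 'I_d -> 'I_d -> R) (b : 'I_d -> R) : R :=
  \sum_(k < d) colnorm A k ^+ 2 *
     \big[Num.max/0]_(l < d) (b l ^+ 2 * (A l k / colnorm A k) ^+ 2).

(* weights of M_{i,aj} = X_i \/ a X_j  (for i != j) *)
Definition wM {R : numDomainType} {d : nat} (i : 'I_d) (a : R) (j : 'I_d) : 'I_d -> R :=
  fun l => if l == j then a else if l == i then 1 else 0.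

Definition wX {R : numDomainType} {d : nat} (i : 'I_d) : 'I_d -> R :=
  fun l => if l == i then 1 else 0.

From mathcomp Require Import all_boot all_order all_algebra.
From mathcomp Require Import ring lra.
Set Implicit Arguments. Unset Strict Implicit. Unset Printing Implicit Defensive.
Import Order.TTheory GRing.Theory Num.Theory.
Local Open Scope ring_scope.

(** The normalisation of the angular measure cancels the column norms, so
   sigma^2 of a max-projection is the sum over columns k of the largest
   weighted squared entry of column k.  Hence, column by column,
   sigma^2(X_i \/ a X_j) - sigma^2(X_i \/ X_j) is at most (a^2 - 1) A_jk^2,
   with equality when A_ik <= A_jk or A_jk = 0, and summing over k gives at most
   (a^2 - 1) times the squared norm 1 of row j.  For a source j, row j is the
   unit vector e_j and A_ij <= 1 = A_jj, so equality holds everywhere.  If i is an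
   ancestor of j, concatenating a maximal path into i with one from i to j shows
   that row i scaled by a_ji / c_ii is dominated by row j, strictly at the
   entry j; after standardisation this gives 0 < A_ji < A_ii and the column i
   loses a positive amount.  A non-source has a parent, which is an ancestor. *)

Lemma bigmax_id_or_attained (disp : Order.disp_t) (T : orderType disp)
    (I : Type) (r : seq I) (P : pred I) (F : I -> T) (x0 : T) :
  \big[Order.max/x0]_(i <- r | P i) F i = x0 \/
  exists2 i, P i & \big[Order.max/x0]_(i <- r | P i) F i = F i.
Proof.
elim/big_ind: _ => [|x y hx hy|i Pi]; [by left| |by right; exists i].
by rewrite maxEle; case: (x <= y)%O.
Qed.

Lemma zip_cons_pairmap (T : Type) (x : T) s : zip (x :: s) s = pairmap pair x s.
Proof. by elim: s x => [|y s IH] x //=; rewrite IH. Qed.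

Section MaxScale.
Variable R : realDomainType.
Implicit Types b x y : R.

Lemma max_scale_sub_le b x y : 1 <= b -> 0 <= x -> 0 <= y ->
  Num.max (b * x) y - Num.max x y <= (b - 1) * x.
Proof. by move=> *; rewrite !maxEle; case: (leP (b * x) y); case: (leP x y); nra. Qed.

Lemma max_scale_sub_lt b x y : 1 < b -> 0 < x -> x < y ->
  Num.max (b * x) y - Num.max x y < (b - 1) * x.
Proof. by move=> *; rewrite !maxEle; case: (leP (b * x) y); case: (leP x y); nra. Qed.

Lemma max_scale_sub_eq b x y : 1 <= b -> 0 <= x -> y <= x ->
  Num.max (b * x) y - Num.max x y = (b - 1) * x.
Proof. by move=> *; rewrite !maxEle; case: (leP (b * x) y); case: (leP x y); nra. Qed.

End MaxScale.

Section DagPaths.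
Variables (d : nat) (E : rel 'I_d).
Hypothesis hE : acyclic E.

Lemma acyclic_path_uniq x s : path E x s -> uniq (x :: s).
Proof.
elim: s x => [|y s IH] x //= /andP [Exy ps].
have := IH y ps => /= ->; rewrite andbT.
apply/negP => /(path_connect ps) cyx.
by move: (hE Exy); rewrite cyx.
Qed.

Lemma acyclic_path_size x s : path E x s -> (size s < d)%N.
Proof.
move=> /acyclic_path_uniq /uniq_leq_size /(_ (fun y _ => mem_enum _ y)).
by rewrite size_enum_ord.
Qed.

Lemma connect_antisym i j : i != j -> connect E i j -> ~~ connect E j i.
Proof.
move=> nij cij; apply/negP => /connectP [[|y p] /=].
  by move=> _ eji; move: nij; rewrite eji eqxx.
case/andP => Ejy pyp lp.
have cyi : connect E y i by apply/connectP; exists p.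
by move: (hE Ejy); rewrite (connect_trans cyi cij).
Qed.

Lemma source_or_ancestor j : source E j \/ exists i, ancestor E i j.
Proof.
have [/existsP [i Eij]|/existsPn nE] := boolP [exists i, E i j]; last by left.
right; exists i; rewrite /ancestor connect1 //=.
by apply: contraTneq (hE Eij) => ->; rewrite connect0.
Qed.

End DagPaths.

Section PathWeights.
Variables (R : realDomainType) (d : nat) (E : rel 'I_d) (c : 'I_d -> 'I_d -> R).
Hypothesis hE : acyclic E.
Hypothesis hc_edge : forall i k, E k i -> 0 < c i k.
Hypothesis hc_diag : forall i, 0 < c i i.

Local Notation a_raw := (coef_raw E c).

Lemma path_weight_cat j s1 s2 :
  path_weight c j s1 * path_weight c (last j s1) s2
  = c (last j s1) (last j s1) * path_weight c j (s1 ++ s2).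
Proof.
by rewrite /path_weight !zip_cons_pairmap pairmap_cat big_cat /=; ring.
Qed.

Lemma path_weight_gt0 j s : path E j s -> 0 < path_weight c j s.
Proof.
rewrite /path_weight => ps; rewrite mulr_gt0 //.
elim: s j ps => [|y s IH] j /=; first by rewrite big_nil.
by case/andP => Ejy ps; rewrite big_cons mulr_gt0 ?hc_edge ?IH.
Qed.

Lemma path_weight_le_coef_raw j s : path E j s -> path_weight c j s <= a_raw (last j s) j.
Proof.
move=> ps; rewrite /coef_raw.
apply: (bigmax_sup (Ordinal (acyclic_path_size hE ps))) => //=.
by apply: (bigmax_sup (in_tuple s)); rewrite //= ps eqxx.
Qed.

Lemma coef_raw_attained i j :
  a_raw i j = 0 \/
  exists s, [/\ path E j s, last j s = i & a_raw i j = path_weight c j s].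
Proof.
rewrite /coef_raw.
case: (bigmax_id_or_attained (index_enum 'I_d) (fun _ => true)
  (fun m : 'I_d => \big[Num.max/0]_(s : m.-tuple 'I_d | path E j s && (last j s == i))
                    path_weight c j s) 0) => [->|[m _ ->]]; first by left.
case: (bigmax_id_or_attained (index_enum _)
  (fun s : m.-tuple 'I_d => path E j s && (last j s == i)) (path_weight c j) 0)
  => [->|[s /andP [ps /eqP ls] ->]]; first by left.
by right; exists s.
Qed.

Lemma coef_raw_ge0 i j : 0 <= a_raw i j.
Proof.
by case: (coef_raw_attained i j) => [->|[s [ps _ ->]]]; last exact/ltW/path_weight_gt0.
Qed.

Lemma coef_raw_diag_ge i : c i i <= a_raw i i.
Proof.
have := path_weight_le_coef_raw (j := i) (s := [::]) isT.
by rewrite /path_weight big_nil mulr1.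
Qed.

Lemma coef_raw_diag_gt0 i : 0 < a_raw i i.
Proof. exact: lt_le_trans (hc_diag i) (coef_raw_diag_ge i). Qed.

Lemma coef_raw_gt0 i j : connect E i j -> 0 < a_raw j i.
Proof.
by case/connectP => p pp ->; apply: lt_le_trans (path_weight_le_coef_raw pp);
  exact: path_weight_gt0.
Qed.

Lemma coef_raw_eq0 i j : ~~ connect E j i -> a_raw i j = 0.
Proof.
case: (coef_raw_attained i j) => // [[s [ps ls _]]].
by rewrite (_ : connect E j i) //; apply/connectP; exists s.
Qed.

Lemma coef_raw_source j k : source E j -> k != j -> a_raw j k = 0.
Proof.
move=> sj nkj; case: (coef_raw_attained j k) => // [[s [ps ls _]]].
move: ps ls; case/lastP: s => [|p y] /=.
  by move=> _ ekj; move: nkj; rewrite ekj eqxx.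
rewrite rcons_path last_rcons => /andP [_ Ey] eyj.
by move: (sj (last k p)); rewrite -eyj Ey.
Qed.

(* Concatenate maximal paths l ~> i and i ~> j; the weight c_ii is then counted twice. *)
Lemma coef_raw_mul_le i j l : a_raw i l * a_raw j i <= c i i * a_raw j l.
Proof.
have hR x y := mulr_ge0 (ltW (hc_diag x)) (coef_raw_ge0 y l).
case: (coef_raw_attained i l) => [->|[s1 [p1 l1 ->]]]; first by rewrite mul0r hR.
case: (coef_raw_attained j i) => [->|[s2 [p2 l2 ->]]]; first by rewrite mulr0 hR.
have p12 : path E l (s1 ++ s2) by rewrite cat_path p1 l1 p2.
rewrite -l1 path_weight_cat ler_wpM2l ?(ltW (hc_diag _)) //.
by have := path_weight_le_coef_raw p12; rewrite last_cat l1 l2.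
Qed.

End PathWeights.

Lemma mulr_sqrt_sum_sqr (R : rcfType) (I : finType) (t : R) (v : I -> R) :
  0 <= t -> t * Num.sqrt (\sum_l v l ^+ 2) = Num.sqrt (\sum_l (t * v l) ^+ 2).
Proof.
move=> ht; under [in RHS]eq_bigr do rewrite exprMn.
by rewrite -mulr_sumr sqrtrM ?sqr_ge0 // sqrtr_sqr ger0_norm.
Qed.

Lemma ltr_pM_sqrt_sum_sqr (R : rcfType) (I : finType) (s t : R) (u v : I -> R) k :
  0 <= s -> 0 <= t -> (forall l, 0 <= s * u l) ->
  (forall l, s * u l <= t * v l) -> s * u k < t * v k ->
  s * Num.sqrt (\sum_l u l ^+ 2) < t * Num.sqrt (\sum_l v l ^+ 2).
Proof.
move=> hs ht su0 le_uv lt_uv; have tv0 l := le_trans (su0 l) (le_uv l).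
rewrite !mulr_sqrt_sum_sqr // ltr_sqrt; last first.
  rewrite (bigD1 k) //= ltr_pwDl ?exprn_gt0 ?(le_lt_trans (su0 k)) //.
  by apply: sumr_ge0 => l _; exact: sqr_ge0.
rewrite (bigD1 k) // [ltRHS](bigD1 k) //= ltr_leD ?ltr_sqr ?nnegrE //.
by apply: ler_sum => l _; rewrite ler_sqr ?nnegrE.
Qed.

Section Standardisation.
Variables (R : rcfType) (d : nat) (E : rel 'I_d) (c : 'I_d -> 'I_d -> R).
Hypothesis hE : acyclic E.
Hypothesis hc_edge : forall i k, E k i -> 0 < c i k.
Hypothesis hc_diag : forall i, 0 < c i i.

Local Notation a_raw := (coef_raw E c).
Local Notation A := (coef E c).
Local Notation rownorm i := (Num.sqrt (\sum_(l < d) a_raw i l ^+ 2)).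

Lemma coef_rownorm_gt0 i : 0 < rownorm i.
Proof.
rewrite sqrtr_gt0 (bigD1 i) //= ltr_pwDl ?exprn_gt0 ?coef_raw_diag_gt0 //.
by apply: sumr_ge0 => l _; exact: sqr_ge0.
Qed.

Lemma coef_ge0 i j : 0 <= A i j.
Proof. by rewrite divr_ge0 ?coef_raw_ge0 ?sqrtr_ge0. Qed.

Lemma sum_coef_sqr i : \sum_(l < d) A i l ^+ 2 = 1.
Proof.
under eq_bigr do rewrite expr_div_n.
have := coef_rownorm_gt0 i; rewrite sqrtr_gt0 => hS.
by rewrite -mulr_suml sqr_sqrtr ?ltW // divff // gt_eqF.
Qed.

Lemma coef_source_offdiag j k : source E j -> k != j -> A j k = 0.
Proof. by move=> sj nkj; rewrite /coef coef_raw_source // mul0r. Qed.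

Lemma coef_source_diag j : source E j -> A j j = 1.
Proof.
move=> sj; have := sum_coef_sqr j.
rewrite (bigD1 j) //= big1 ?addr0 => [/eqP|l /(coef_source_offdiag sj) ->].
  by rewrite sqrf_eq1 => /orP [/eqP //|/eqP h]; move: (coef_ge0 j j); rewrite h ler0N1.
by rewrite expr0n.
Qed.

Lemma coef_ancestor_gt0 i j : ancestor E i j -> 0 < A j i.
Proof.
by case/andP => cij _; rewrite divr_gt0 ?coef_rownorm_gt0 ?coef_raw_gt0.
Qed.

(* Row i of the raw matrix, scaled by a_ji / c_ii, is dominated by row j,
   strictly at column j since i is not reachable from j. *)
Lemma coef_ancestor_lt_diag i j : ancestor E i j -> A j i < A i i.
Proof.
case/andP => cij nij.
have dom : a_raw j i * rownorm i < c i i * rownorm j.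
  apply: (ltr_pM_sqrt_sum_sqr (k := j)); rewrite ?coef_raw_ge0 ?ltW //.
  - by move=> l; rewrite mulr_ge0 ?coef_raw_ge0.
  - by move=> l; rewrite mulrC coef_raw_mul_le.
  rewrite (coef_raw_eq0 c (connect_antisym hE nij cij)) mulr0.
  by rewrite mulr_gt0 ?coef_raw_diag_gt0.
rewrite /coef ltr_pdivrMr ?coef_rownorm_gt0 // mulrAC ltr_pdivlMr ?coef_rownorm_gt0 //.
by apply: lt_le_trans dom _; rewrite ler_wpM2r ?sqrtr_ge0 ?coef_raw_diag_ge.
Qed.

End Standardisation.

Lemma mul_sqr_div_sqr (R : realFieldType) (x y : R) :
  x ^+ 2 <= y ^+ 2 -> y ^+ 2 * (x / y) ^+ 2 = x ^+ 2.
Proof.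
have [-> h|y0 _] := eqVneq y 0.
  rewrite expr0n mul0r in h *; apply/esym/eqP.
  by rewrite eq_le h sqr_ge0.
by rewrite expr_div_n mulrCA divff ?mulr1 // expf_neq0.
Qed.

Section AngularScaling.
Variables (R : rcfType) (d : nat) (A : 'I_d -> 'I_d -> R).

Lemma sqr_le_sqr_colnorm l k : A l k ^+ 2 <= colnorm A k ^+ 2.
Proof.
have sum_ge0 (P : pred 'I_d) : 0 <= \sum_(m | P m) A m k ^+ 2.
  by apply: sumr_ge0 => m _; exact: sqr_ge0.
by rewrite sqr_sqrtr // (bigD1 l) //= lerDl.
Qed.

(* The mass ||a_k||^2 of the atom a_k / ||a_k|| cancels the normalisation. *)
Lemma sigma2E (b : 'I_d -> R) :
  sigma2 A b = \sum_(k < d) \big[Num.max/0]_(l < d) (b l ^+ 2 * A l k ^+ 2).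
Proof.
apply: eq_bigr => k _.
rewrite (big_morph _ (fun x y => maxr_pMr x y (sqr_ge0 (colnorm A k))) (mulr0 _)).
apply: eq_bigr => l _.
by rewrite mulrCA mul_sqr_div_sqr ?sqr_le_sqr_colnorm.
Qed.

Lemma bigmax_wX i k :
  \big[Num.max/0]_(l < d) ((wX i : _ -> R) l ^+ 2 * A l k ^+ 2) = A i k ^+ 2.
Proof.
rewrite (bigmaxD1 i) // bigmax_eq_id => [|l /andP [_ nli]].
  by rewrite /wX eqxx expr1n mul1r max_l ?sqr_ge0.
by rewrite /wX (negbTE nli) expr0n mul0r.
Qed.

Lemma bigmax_wM i j (a : R) k : i != j ->
  \big[Num.max/0]_(l < d) (wM i a j l ^+ 2 * A l k ^+ 2)
  = Num.max (a ^+ 2 * A j k ^+ 2) (A i k ^+ 2).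
Proof.
move=> nij; rewrite (bigmaxD1 j) // (bigmaxD1 i) /=; last exact: nij.
rewrite bigmax_eq_id.
  by rewrite /wM eqxx (negbTE nij) eqxx /= expr1n mul1r (max_l (sqr_ge0 _)).
move=> l /andP [nlj nli].
by rewrite /wM (negbTE nlj) (negbTE nli) expr0n mul0r.
Qed.

Lemma sigma2_wX i : sigma2 A (wX i) = \sum_(k < d) A i k ^+ 2.
Proof. by rewrite sigma2E; apply: eq_bigr => k _; rewrite bigmax_wX. Qed.

Lemma sigma2_wM_sub i j (a : R) : i != j ->
  sigma2 A (wM i a j) - sigma2 A (wM i 1 j) =
  \sum_(k < d) (Num.max (a ^+ 2 * A j k ^+ 2) (A i k ^+ 2)
                - Num.max (A j k ^+ 2) (A i k ^+ 2)).
Proof.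
move=> nij; rewrite !sigma2E -sumrB; apply: eq_bigr => k _.
by rewrite !bigmax_wM // expr1n mul1r.
Qed.

End AngularScaling.

Section MaxProjections.
Variables (R : rcfType) (d : nat) (E : rel 'I_d) (c : 'I_d -> 'I_d -> R).
Hypothesis hE : acyclic E.
Hypothesis hc_edge : forall i k, E k i -> 0 < c i k.
Hypothesis hc_diag : forall i, 0 < c i i.

Local Notation A := (coef E c).
Local Notation sigma2_diff i a j := (sigma2 A (wM i a j) - sigma2 A (wM i 1 j)).

Lemma coef_sqr_le1 i j : A i j ^+ 2 <= 1.
Proof.
rewrite -(sum_coef_sqr hE hc_diag i) (bigD1 j) //= lerDl.
by apply: sumr_ge0 => l _; exact: sqr_ge0.
Qed.

Lemma sum_mul_coef_sqr (x : R) j : \sum_(k < d) x * A j k ^+ 2 = x.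
Proof. by rewrite -mulr_sumr sum_coef_sqr ?mulr1. Qed.

Lemma sigma2_wX_coef i : sigma2 A (wX i) = 1.
Proof. by rewrite sigma2_wX sum_coef_sqr. Qed.

Lemma sigma2_diff_le i j a : 1 <= a ^+ 2 -> i != j -> sigma2_diff i a j <= a ^+ 2 - 1.
Proof.
move=> ha nij; rewrite sigma2_wM_sub // -(sum_mul_coef_sqr (a ^+ 2 - 1) j).
by apply: ler_sum => k _; rewrite max_scale_sub_le ?sqr_ge0.
Qed.

Lemma sigma2_diff_lt i j a : 1 < a ^+ 2 -> ancestor E i j -> sigma2_diff i a j < a ^+ 2 - 1.
Proof.
move=> ha anc; have nij : i != j by case/andP: anc.
rewrite sigma2_wM_sub // -(sum_mul_coef_sqr (a ^+ 2 - 1) j).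
rewrite (bigD1 i) // [ltRHS](bigD1 i) //= ltr_leD //.
  have Aji_gt0 := coef_ancestor_gt0 hE hc_edge hc_diag anc.
  rewrite max_scale_sub_lt ?exprn_gt0 // ltr_sqr ?nnegrE ?coef_ge0 //.
  exact: coef_ancestor_lt_diag.
by apply: ler_sum => k _; rewrite max_scale_sub_le ?sqr_ge0 ?ltW.
Qed.

Lemma sigma2_diff_source i j a :
  1 <= a ^+ 2 -> source E j -> i != j -> sigma2_diff i a j = a ^+ 2 - 1.
Proof.
move=> ha sj nij; rewrite sigma2_wM_sub // -(sum_mul_coef_sqr (a ^+ 2 - 1) j).
apply: eq_bigr => k _.
have [->|nkj] := eqVneq k j.
  by rewrite max_scale_sub_eq ?sqr_ge0 // coef_source_diag // expr1n coef_sqr_le1.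
by rewrite coef_source_offdiag // expr0n !mulr0 subrr.
Qed.

End MaxProjections.

Theorem theorem4p2 (R : rcfType) (d : nat) (E : rel 'I_d)
    (c : 'I_d -> 'I_d -> R)
    (hE : acyclic E)
    (hc_edge : forall i k, E k i -> 0 < c i k)
    (hc_diag : forall i, 0 < c i i)
    (a : R) (ha : 1 < a) (j : 'I_d) :
  let A := coef E c in
  (source E j <->
     (forall i, i != j ->
        sigma2 A (wM i a j) - sigma2 A (wM i 1 j) = (a ^+ 2 - 1) * sigma2 A ((wX i : _ -> R))
        /\ (a ^+ 2 - 1) * sigma2 A ((wX i : _ -> R)) = a ^+ 2 - 1))
  /\
  (~ source E j ->
     forall i, i != j ->
        sigma2 A (wM i a j) - sigma2 A (wM i 1 j) <= a ^+ 2 - 1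
        /\ (ancestor E i j ->
              sigma2 A (wM i a j) - sigma2 A (wM i 1 j) < a ^+ 2 - 1)).
Proof.
move=> A; have ha2 : 1 < a ^+ 2 by rewrite expr2; nra.
have sigma2_wX1 i : (a ^+ 2 - 1) * sigma2 A (wX i) = a ^+ 2 - 1.
  by rewrite (sigma2_wX_coef hE hc_diag) mulr1.
split; last first.
  move=> _ i nij; split; first exact: sigma2_diff_le (ltW ha2) nij.
  exact: sigma2_diff_lt ha2.
split=> [sj i nij | eq_diff].
  by rewrite sigma2_wX1 sigma2_diff_source // ltW.
have [//|[i anc]] := source_or_ancestor hE j.
have nij : i != j by case/andP: anc.
have [e _] := eq_diff i nij.
by move: (sigma2_diff_lt hE hc_edge hc_diag ha2 anc); rewrite e sigma2_wX1 ltxx.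
Qed.
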